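(* Let $d$ be a power of $2$, $1\le k\le d$, and $\delta>0$. Let $g_{a,c}(x)=a(x-c)\bmod d$. Let $L=O(\log^2(d/k))$ and $B=O(k\log(d/\delta))$, and let $(a_1,c_1),\ldots,(a_L,c_L)$ be any pairs of integers in $\{1,\ldots,d\}$ with each $a_\ell$ odd. Then there is a set $R\subseteq\{0,\ldots,d-1\}$ with $|R|=O\big(\sqrt{k\log(d/\delta)}\cdot\log^2(d/k)\big)$ such that for every $\ell\in\{1,\ldots,L\}$ and every $s\in\{0,\ldots,B-1\}$ there exist $r,r'\in R$ with $r-r'=g_{a_\ell,c_\ell}(s)$ or $r-r'=d-g_{a_\ell,c_\ell}(s)$. Consequently, for any $x^{(1)},\dots,x^{(n)}$ drawn from a distribution whose covariance matrix $T$ is circulant with first column $t$ (so $t_u=t_{d-u}$), reading only the entries indexed by $R$ of each sample yields measurements of all entries $t_{g_{a_\ell,c_\ell}(s)}$ read by the sparse Fourier transform procedure described in the context.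
   Context: The sparse Fourier transform procedure referred to: a randomized algorithm which, given $x\in\mathbb{R}^d$ ($d$ a power of 2), sparsity $k$ and error parameter $\delta$, chooses $L=O(\log^2(d/k))$ pairs $(a_\ell,c_\ell)$ uniformly from $\{1,\dots,d\}$ with $a_\ell$ odd, and reads only the blocks of entries $x_{g_{a_\ell,c_\ell}(0)},\dots,x_{g_{a_\ell,c_\ell}(B-1)}$ with $B=O(k\log(d/\delta))$. The implied constants in $|R|$ depend only on those in $L$ and $B$. *)

From Stdlib Require Import Reals ZArith List.
Open Scope R_scope.

Definition g (d a c x : Z) : Z := Z.modulo (a * (x - c)) d.

Definition is_pow2 (d : nat) : Prop := exists m : nat, d = (2 ^ m)%nat.

(** Put m = ⌈√B⌉ and write s < B ≤ m² as s = i m + j with i, j < m.  Then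
    g_{a,c}(s) ≡ a (i m − c) − (−a j) (mod d), so for each pair (a_ℓ, c_ℓ) the
    2m residues a_ℓ (i m − c_ℓ) mod d and −a_ℓ j mod d realise every g_{a_ℓ,c_ℓ}(s)
    as (r − r') mod d; one of r − r', r' − r then equals g(s) or d − g(s).  Altogether
    this uses at most 2 L ⌈√B⌉ = O(√(k log(d/δ)) log²(d/k)) points.  For a circulant
    T we have T_{r,r'} = t_{(r − r') mod d}, so the same pairs read off the entries
    t_{g(s)}. *)

From Stdlib Require Import Reals ZArith List Lia Lra.
Open Scope R_scope.

Definition coarse_residues (d : Z) (m : nat) (a c : Z) : list Z :=
  map (fun i => (a * (Z.of_nat (i * m) - c)) mod d)%Z (seq 0 m).

Definition fine_residues (d : Z) (m : nat) (a : Z) : list Z :=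
  map (fun j => (- a * Z.of_nat j) mod d)%Z (seq 0 m).

Definition difference_cover (d : Z) (m L : nat) (a c : nat -> Z) : list Z :=
  nodup Z.eq_dec
    (flat_map (fun l => coarse_residues d m (a l) (c l) ++ fine_residues d m (a l))
       (seq 1 L)).

Lemma g_split (d a c : Z) (m i j : nat) :
  (g d a c (Z.of_nat (i * m + j)) =
  ((a * (Z.of_nat (i * m) - c)) mod d - (- a * Z.of_nat j) mod d) mod d)%Z.
Proof.
  unfold g; rewrite <- Zminus_mod, Nat2Z.inj_add; f_equal; ring.
Qed.

Lemma mod_diff_cases (d r r' : Z) :
  (0 <= r < d)%Z -> (0 <= r' < d)%Z ->
  (r - r' = (r - r') mod d)%Z \/ (r' - r = d - (r - r') mod d)%Z.
Proof.
  intros Hr Hr'.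
  destruct (Z_le_gt_dec 0 (r - r')) as [Hle | Hgt].
  - left; rewrite Z.mod_small; lia.
  - right; rewrite <- (Z_mod_plus_full (r - r') 1), Z.mod_small; lia.
Qed.

Section DifferenceCover.

Variables (d : Z) (m L : nat) (a c : nat -> Z).

Lemma difference_cover_length :
  (length (difference_cover d m L a c) <= L * (2 * m))%nat.
Proof.
  unfold difference_cover.
  apply Nat.le_trans with (length (flat_map
    (fun l => coarse_residues d m (a l) (c l) ++ fine_residues d m (a l)) (seq 1 L))).
  - apply NoDup_incl_length; [apply NoDup_nodup|].
    intros x; apply nodup_In.
  - rewrite (flat_map_constant_length (c := (2 * m)%nat)), length_seq; [lia|].
    intros l _; unfold coarse_residues, fine_residues.
    rewrite length_app, !length_map, length_seq; lia.
Qed.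

Lemma difference_cover_bounded (r : Z) :
  (0 < d)%Z -> In r (difference_cover d m L a c) -> (0 <= r < d)%Z.
Proof.
  intros Hd Hr; unfold difference_cover in Hr.
  apply nodup_In, in_flat_map in Hr as [l [_ Hr]].
  apply in_app_iff in Hr as [Hr | Hr]; apply in_map_iff in Hr as [x [<- _]];
    now apply Z.mod_pos_bound.
Qed.

Lemma difference_cover_covers (l s : nat) :
  (1 <= l <= L)%nat -> (s < m * m)%nat ->
  exists r r', In r (difference_cover d m L a c) /\ In r' (difference_cover d m L a c) /\
    ((r - r') mod d = g d (a l) (c l) (Z.of_nat s))%Z.
Proof.
  intros Hl Hs.
  assert (Hm : (0 < m)%nat) by (destruct m; lia).
  assert (Hin : forall x, In x (coarse_residues d m (a l) (c l) ++ fine_residues d m (a l)) ->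
            In x (difference_cover d m L a c)).
  { intros x Hx; apply nodup_In, in_flat_map.
    exists l; split; [apply in_seq; lia | exact Hx]. }
  exists ((a l * (Z.of_nat (s / m * m) - c l)) mod d)%Z,
    ((- a l * Z.of_nat (s mod m)) mod d)%Z.
  split; [|split].
  - apply Hin, in_app_iff; left; apply in_map_iff.
    exists (s / m)%nat; split; [reflexivity|].
    apply in_seq; split; [lia|]; apply Nat.Div0.div_lt_upper_bound; lia.
  - apply Hin, in_app_iff; right; apply in_map_iff.
    exists (s mod m)%nat; split; [reflexivity|].
    apply in_seq; split; [lia|]; apply Nat.mod_upper_bound; lia.
  - rewrite <- g_split, Nat.mul_comm, <- Nat.div_mod; [reflexivity | lia].
Qed.

End DifferenceCover.

Lemma sqrt_up_le_twice_sqrt (B : nat) : INR (Nat.sqrt_up B) <= 2 * sqrt (INR B).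
Proof.
  destruct (Nat.eq_dec B 0) as [-> | HB].
  - rewrite Nat.sqrt_up_eqn0 by lia; simpl; rewrite sqrt_0; lra.
  - pose proof (Nat.sqrt_up_spec B) as [Hlt _]; [lia|].
    set (m := Nat.sqrt_up B) in *; clearbody m.
    assert (Hm : INR (Nat.pred m) < sqrt (INR B)).
    { rewrite <- (sqrt_square (INR (Nat.pred m))) by apply pos_INR.
      apply sqrt_lt_1_alt; split.
      - apply Rmult_le_pos; apply pos_INR.
      - rewrite <- mult_INR; apply lt_INR; exact Hlt. }
    assert (H1 : 1 <= sqrt (INR B)).
    { rewrite <- sqrt_1; apply sqrt_le_1_alt, (le_INR 1); lia. }
    destruct m as [|m']; simpl in Hm; [simpl; lra|].
    rewrite S_INR; lra.
Qed.

Lemma two_sqrt_up_le (CB X : R) (B : nat) :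
  0 <= CB -> INR B <= CB * X ->
  INR (2 * Nat.sqrt_up B) <= 4 * sqrt CB * sqrt X.
Proof.
  intros HCB HB.
  assert (HsB : sqrt (INR B) <= sqrt CB * sqrt X).
  { rewrite <- sqrt_mult_alt by exact HCB; apply sqrt_le_1_alt, HB. }
  rewrite mult_INR; pose proof (sqrt_up_le_twice_sqrt B); simpl (INR 2); lra.
Qed.

Theorem corollary1 :
  forall CL CB : R, 0 < CL -> 0 < CB ->
  exists C : R, 0 < C /\
  forall (d k : nat) (delta : R) (L B : nat) (a c : nat -> Z),
    is_pow2 d ->
    (1 <= k <= d)%nat ->
    0 < delta ->
    INR L <= CL * (ln (INR d / INR k)) ^ 2 ->
    INR B <= CB * (INR k * ln (INR d / delta)) ->
    (forall l : nat, (1 <= l <= L)%nat ->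
       (1 <= a l <= Z.of_nat d)%Z /\ (1 <= c l <= Z.of_nat d)%Z /\ Z.odd (a l) = true) ->
    exists Rs : list Z,
      NoDup Rs /\
      (forall r, In r Rs -> (0 <= r < Z.of_nat d)%Z) /\
      INR (length Rs) <= C * sqrt (INR k * ln (INR d / delta)) * (ln (INR d / INR k)) ^ 2 /\
      (forall l s : nat, (1 <= l <= L)%nat -> (s < B)%nat ->
         exists r r', In r Rs /\ In r' Rs /\
           ((r - r' = g (Z.of_nat d) (a l) (c l) (Z.of_nat s))%Z \/
            (r - r' = Z.of_nat d - g (Z.of_nat d) (a l) (c l) (Z.of_nat s))%Z)) /\
      (* consequence: for a circulant (covariance) matrix T with symmetric first column t,
         the entries indexed by Rs give all entries t_{g(s)} *)
      (forall (t : Z -> R) (T : Z -> Z -> R),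
         (forall u, (0 < u < Z.of_nat d)%Z -> t u = t (Z.of_nat d - u)%Z) ->
         (forall i j, (0 <= i < Z.of_nat d)%Z -> (0 <= j < Z.of_nat d)%Z ->
            T i j = t (Z.modulo (i - j) (Z.of_nat d))) ->
         forall l s : nat, (1 <= l <= L)%nat -> (s < B)%nat ->
           exists r r', In r Rs /\ In r' Rs /\
             T r r' = t (g (Z.of_nat d) (a l) (c l) (Z.of_nat s))).
Proof.
  intros CL CB HCL HCB.
  exists (4 * CL * sqrt CB); split; [pose proof (sqrt_lt_R0 CB HCB); nra|].
  intros d k delta L B a c _ Hk _ HL HB _.
  assert (Hd : (0 < Z.of_nat d)%Z) by lia.
  set (Rs := difference_cover (Z.of_nat d) (Nat.sqrt_up B) L a c).
  assert (Hbound : forall r, In r Rs -> (0 <= r < Z.of_nat d)%Z)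
    by (intros r; apply difference_cover_bounded, Hd).
  assert (Hcover : forall l s, (1 <= l <= L)%nat -> (s < B)%nat ->
    exists r r', In r Rs /\ In r' Rs /\
      ((r - r') mod Z.of_nat d = g (Z.of_nat d) (a l) (c l) (Z.of_nat s))%Z).
  { intros l s Hl Hs; apply difference_cover_covers; [exact Hl|].
    pose proof (Nat.sqrt_up_spec B); lia. }
  exists Rs; split; [apply NoDup_nodup | split; [exact Hbound | split; [| split]]].
  - pose proof (difference_cover_length (Z.of_nat d) (Nat.sqrt_up B) L a c) as Hlen.
    apply le_INR in Hlen; rewrite mult_INR in Hlen.
    eapply Rle_trans; [exact Hlen|].
    eapply Rle_trans; [apply Rmult_le_compat; [apply pos_INR | apply pos_INR | exact HL |]|].
    + exact (two_sqrt_up_le _ _ B (Rlt_le _ _ HCB) HB).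
    + right; ring.
  - intros l s Hl Hs.
    destruct (Hcover l s Hl Hs) as [r [r' [Hr [Hr' <-]]]].
    destruct (mod_diff_cases _ r r' (Hbound r Hr) (Hbound r' Hr')) as [Heq | Heq].
    + exists r, r'; auto.
    + exists r', r; auto.
  - intros t T _ HT l s Hl Hs.
    destruct (Hcover l s Hl Hs) as [r [r' [Hr [Hr' Hg]]]].
    exists r, r'; repeat split; [exact Hr | exact Hr' |].
    rewrite HT, Hg by auto; reflexivity.
Qed.
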